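(* Let $A\in\mathcal A_n$ with Kupisch series $[c_0,\dots,c_{n-1}]$. Then the directed graph $\tau(A)$ is a tree rooted at the vertex $n$.
   Context: $K$ is an algebraically closed field. $\mathcal A_n$ is the set of ordered products $A=A_1\times\cdots\times A_k$ of connected linear Nakayama algebras with $n$ simple modules in total (the order of factors matters). The Kupisch series of $A$ is the concatenation of the Kupisch series of $A_1,\dots,A_k$, where a connected linear Nakayama algebra with $m$ simple modules has Kupisch series $[c_0,\dots,c_{m-1}]$, $c_i=\dim e_iA$, characterized by $c_{i+1}+1\ge c_i\ge2$ for $0\le i<m-1$ and $c_{m-1}=1$. $\tau(A)$ is the directed graph with vertex set $\{0,\dots,n\}$ and an edge $i+c_i\to i$ for each $0\le i<n$. *)

From mathcomp Require Import all_boot.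
Set Implicit Arguments. Unset Strict Implicit. Unset Printing Implicit Defensive.

(* Kupisch series [c_0,...,c_{m-1}] of a connected linear Nakayama algebra
   with m >= 1 simple modules: c_{i+1}+1 >= c_i >= 2 for i < m-1, c_{m-1} = 1. *)
Definition kupisch_conn (s : seq nat) : Prop :=
  0 < size s /\ nth 0 s (size s).-1 = 1 /\
  (forall i, i < (size s).-1 ->
     nth 0 s i.+1 + 1 >= nth 0 s i /\ nth 0 s i >= 2).

(* An element of A_n: an ordered list of connected linear Nakayama algebras
   (each represented by its Kupisch series) with n simple modules in total. *)
Definition in_A (n : nat) (A : seq (seq nat)) : Prop :=
  (forall s, s \in A -> kupisch_conn s) /\ sumn (map size A) = n.

Definition kupisch (A : seq (seq nat)) : seq nat := flatten A.

(* Directed multigraphs: vertices 0..N-1, edges given as a list of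
   (source, target) pairs; edges are identified by their index in the list. *)
Definition tau_edges (c : seq nat) : seq (nat * nat) :=
  [seq (i + nth 0 c i, i) | i <- iota 0 (size c)].

Fixpoint is_walk (E : seq (nat * nat)) (u : nat) (ks : seq nat) (v : nat) : bool :=
  match ks with
  | [::] => u == v
  | k :: ks' => [&& k < size E, (nth (0,0) E k).1 == u &
                   is_walk E (nth (0,0) E k).2 ks' v]
  end.

Definition rooted_tree (N : nat) (E : seq (nat * nat)) (r : nat) : Prop :=
  r < N /\ (forall e, e \in E -> (e.1 < N) && (e.2 < N)) /\
  (forall v, v < N -> exists! ks : seq nat, is_walk E r ks v).

From mathcomp Require Import all_boot.
From mathcomp Require Import zify.
Set Implicit Arguments. Unset Strict Implicit. Unset Printing Implicit Defensive.

(* Every vertex i < n of tau(A) has exactly one incoming edge, coming from its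
   "parent" i + c_i, and the Kupisch inequalities give i < i + c_i <= n, while
   n has no incoming edge.  Following parents from any vertex therefore climbs
   strictly up to n, and reversing this climb is the only walk from n. *)

Lemma is_walk_rcons E u ks k v :
  is_walk E u (rcons ks k) v =
  is_walk E u ks (nth (0,0) E k).1 && ((k < size E) && ((nth (0,0) E k).2 == v)).
Proof.
elim: ks u => [|k' ks IH] u /=; first by rewrite [u == _]eq_sym andbCA.
by rewrite IH !andbA.
Qed.

Definition parent_edges (p : nat -> nat) (n : nat) : seq (nat * nat) :=
  [seq (p i, i) | i <- iota 0 n].

Section ParentTree.

Variables (p : nat -> nat) (n : nat).
Hypothesis parent_gt : forall i, i < n -> i < p i <= n.

Let E := parent_edges p n.

Lemma size_parent_edges : size E = n.
Proof. by rewrite size_map size_iota. Qed.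

Lemma nth_parent_edges k : k < n -> nth (0,0) E k = (p k, k).
Proof. by move=> lt_kn; rewrite (nth_map 0) ?size_iota // nth_iota. Qed.

Lemma is_walk_rcons_parent u ks k v :
  is_walk E u (rcons ks k) v = [&& v < n, k == v & is_walk E u ks (p v)].
Proof.
rewrite is_walk_rcons size_parent_edges.
case: (ltnP k n) => [lt_kn|le_nk]; last first.
  by rewrite andbF; case: eqP => [<-|_]; rewrite ?ltnNge ?le_nk ?andbF.
rewrite nth_parent_edges //=.
by case: eqP => [<-|_]; rewrite ?lt_kn /= ?andbT ?andbF.
Qed.

Lemma exists_walk_from_root v : v <= n -> exists ks, is_walk E n ks v.
Proof.
move: {2}(n - v) (leqnn (n - v)) => d; elim: d v => [|d IH] v le_d le_vn.
  by exists [::]; apply/eqP; lia.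
case: (ltnP v n) => [lt_vn|le_nv]; last by exists [::]; apply/eqP; lia.
have /andP[lt_vp le_pn] := parent_gt lt_vn.
have [ks walk_ks] := IH (p v) ltac:(lia) le_pn.
by exists (rcons ks v); rewrite is_walk_rcons_parent lt_vn eqxx.
Qed.

Lemma walk_from_root_unique ks1 ks2 v :
  is_walk E n ks1 v -> is_walk E n ks2 v -> ks1 = ks2.
Proof.
elim/last_ind: ks1 ks2 v => [|ks1 k1 IH] ks2 v;
  case/lastP: ks2 => [|ks2 k2] //; rewrite ?is_walk_rcons_parent /=.
- by move=> /eqP <-; rewrite ltnn.
- by move=> /and3P[lt_vn _ _] /eqP eq_nv; rewrite eq_nv ltnn in lt_vn.
- move=> /and3P[_ /eqP -> walk1] /and3P[_ /eqP -> walk2].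
  by rewrite (IH _ _ walk1 walk2).
Qed.

Lemma rooted_tree_parent_edges : rooted_tree n.+1 E n.
Proof.
split=> //; split.
  move=> e /mapP[i]; rewrite mem_iota add0n => lt_in -> /=.
  by have /andP[_ le_pn] := parent_gt lt_in; rewrite !ltnS le_pn ltnW.
move=> v /ltnSE le_vn; have [ks walk_ks] := exists_walk_from_root le_vn.
by exists ks; split=> // ks'; apply: walk_from_root_unique.
Qed.

End ParentTree.

Lemma kupisch_conn_bound s i : kupisch_conn s -> i < size s ->
  i < i + nth 0 s i <= size s.
Proof.
case=> size_gt0 [last1 step] lt_is.
(* The step condition says that j + c_j is nondecreasing in j. *)
have climb d j : j + d = (size s).-1 -> j + nth 0 s j <= size s.
  elim: d j => [|d IH] j; first by rewrite addn0 => ->; rewrite last1; lia.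
  move=> eq_jd; have [le_step _] := step j ltac:(lia).
  have := IH j.+1 ltac:(lia); lia.
rewrite (climb ((size s).-1 - i)); last by lia.
case: (ltnP i (size s).-1) => [lt_i_last|ge_i_last].
  by have [_ ge2] := step i lt_i_last; lia.
have eq_i_last : i = (size s).-1 by lia.
by rewrite eq_i_last last1; lia.
Qed.

Lemma kupisch_flatten_bound (A : seq (seq nat)) i :
  (forall s, s \in A -> kupisch_conn s) -> i < size (flatten A) ->
  i < i + nth 0 (flatten A) i <= size (flatten A).
Proof.
elim: A i => [|s A IH] i // conn_A; rewrite /= size_cat nth_cat => lt_i.
have conn_s := conn_A s (mem_head s A).
case: (ltnP i (size s)) => [lt_is|ge_is].
  by have := kupisch_conn_bound conn_s lt_is; lia.
have conn_tl t : t \in A -> kupisch_conn t.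
  by move=> tA; apply: conn_A; rewrite inE tA orbT.
by have := IH (i - size s) conn_tl ltac:(lia); lia.
Qed.

Theorem lemma3p1 (n : nat) (A : seq (seq nat)) :
  in_A n A -> rooted_tree n.+1 (tau_edges (kupisch A)) n.
Proof.
case=> conn_A <-; rewrite -size_flatten.
apply: (@rooted_tree_parent_edges (fun i => i + nth 0 (kupisch A) i)).
by move=> i; apply: kupisch_flatten_bound.
Qed.
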